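(* Let two users be at $(x_1,y_1,0),(x_2,y_2,0)$ with $-\frac{D_{\rm L}}{2}\le x_m\le\frac{D_{\rm L}}{2}$, ordered so that $y_1^2\le y_2^2$, let $d>0$, $\eta>0$, $\sigma^2>0$, and for an antenna at $(x,0,d)$ let $\delta_m(x)=(x-x_m)^2+y_m^2+d^2$. Define $$R_2^{\rm NOMA}=\log\left(1+\frac{\eta P_2}{\eta P_1+\sigma^2\delta_2(x)}\right),\quad R_0^{\rm NOMA}=\log\left(1+\frac{\eta P_2}{\eta P_1+\sigma^2\delta_1(x)}\right),\quad R_1^{\rm NOMA}=\log\left(1+\frac{\eta P_1}{\sigma^2\delta_1(x)}\right),$$ and consider $$\min_{P_1,P_2\ge0,\ x}\ P_1+P_2\quad\text{s.t.}\quad R_m^{\rm NOMA}\ge R\ (m=0,1,2),\quad -\frac{D_{\rm L}}{2}\le x\le\frac{D_{\rm L}}{2}.$$ If $R\ge\frac12$, then an optimal solution is $$x^*=\frac{x_2}{e^R+1}+\frac{e^Rx_1}{e^R+1},\quad P_1^*=\tilde\epsilon(x^*-x_1)^2+\tilde\tau_1,\quad P_2^*=\frac{\tilde\epsilon\eta}{\sigma^2}P_1^*+\tilde\epsilon(x^*-x_2)^2+\tilde\tau_2,$$ where $\tilde\epsilon=\frac{\sigma^2}{\eta}(e^R-1)$ and $\tilde\tau_m=\tilde\epsilon(y_m^2+d^2)$.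
   Context: Two-user power-domain NOMA with a single pinching antenna at $(x,0,d)$ on a waveguide of height $d$; user 1 performs successive interference cancellation: it first decodes user 2's signal (rate $R_0^{\rm NOMA}$), then its own (rate $R_1^{\rm NOMA}$); user 2 decodes its own signal treating user 1's as interference (rate $R_2^{\rm NOMA}$). $P_m$ is the power for user $m$'s signal, $R$ is the target rate, $\log$ is natural. *)

From Stdlib Require Import Reals.
Open Scope R_scope.

Definition delta (xm ym d x : R) : R := (x - xm)^2 + ym^2 + d^2.

Definition R2_NOMA (eta sigma2 P1 P2 x2 y2 d x : R) : R :=
  ln (1 + eta * P2 / (eta * P1 + sigma2 * delta x2 y2 d x)).
Definition R0_NOMA (eta sigma2 P1 P2 x1 y1 d x : R) : R :=
  ln (1 + eta * P2 / (eta * P1 + sigma2 * delta x1 y1 d x)).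
Definition R1_NOMA (eta sigma2 P1 x1 y1 d x : R) : R :=
  ln (1 + eta * P1 / (sigma2 * delta x1 y1 d x)).

Definition feasible (DL eta sigma2 d Rt x1 y1 x2 y2 P1 P2 x : R) : Prop :=
  0 <= P1 /\ 0 <= P2 /\
  R0_NOMA eta sigma2 P1 P2 x1 y1 d x >= Rt /\
  R1_NOMA eta sigma2 P1 x1 y1 d x >= Rt /\
  R2_NOMA eta sigma2 P1 P2 x2 y2 d x >= Rt /\
  - DL / 2 <= x <= DL / 2.

Definition optimal (DL eta sigma2 d Rt x1 y1 x2 y2 P1 P2 x : R) : Prop :=
  feasible DL eta sigma2 d Rt x1 y1 x2 y2 P1 P2 x /\
  forall P1' P2' x', feasible DL eta sigma2 d Rt x1 y1 x2 y2 P1' P2' x' ->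
    P1 + P2 <= P1' + P2'.

From Stdlib Require Import Reals Lra Psatz.
Open Scope R_scope.

(* With E = exp Rt and eps_tilde = sigma2 (E - 1) / eta, the constraints R1 >= Rt and
   R2 >= Rt say exactly P1 >= eps_tilde delta1(x) and P2 >= (E - 1) P1 + eps_tilde delta2(x),
   so every feasible point has total power at least eps_tilde (E delta1(x) + delta2(x)).
   This quadratic in x is minimised at the mean xs of x1 and x2 with weights E and 1,
   which lies between the users.  As E >= 1 and y1^2 <= y2^2, delta1(xs) <= delta2(xs),
   so the powers making R1 and R2 tight at xs also satisfy R0 >= Rt. *)

Lemma ln_ge_iff (y r : R) : 0 < y -> ln y >= r <-> y >= exp r.
Proof.
  intros y_pos; split; intros.
  - destruct (Rlt_or_le y (exp r)) as [lt_y|]; [|lra].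
    apply ln_increasing in lt_y; [|exact y_pos].
    rewrite ln_exp in lt_y; lra.
  - destruct (Rlt_or_le (ln y) r) as [lt_ln|]; [|lra].
    apply exp_increasing in lt_ln.
    rewrite exp_ln in lt_ln by exact y_pos; lra.
Qed.

Lemma ln_1_plus_ratio_ge_iff (S N r : R) :
  0 <= S -> 0 < N -> ln (1 + S / N) >= r <-> S >= (exp r - 1) * N.
Proof.
  intros S_ge0 N_pos.
  assert (ratio_ge0 : 0 <= S / N) by (apply Rle_mult_inv_pos; lra).
  rewrite ln_ge_iff by lra.
  replace S with (S / N * N) at 2 by (field; lra).
  split; intros; nra.
Qed.

Lemma delta_pos (xm ym d x : R) : 0 < d -> 0 < delta xm ym d x.
Proof.
  intros d_pos; unfold delta.
  pose proof (pow2_ge_0 (x - xm)); pose proof (pow2_ge_0 ym).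
  pose proof (pow_lt d 2 d_pos); lra.
Qed.

Definition weighted_mean (w a b : R) : R := b / (w + 1) + w * a / (w + 1).

Lemma weighted_mean_between (w a b lo hi : R) :
  0 <= w -> lo <= a <= hi -> lo <= b <= hi -> lo <= weighted_mean w a b <= hi.
Proof.
  intros w_ge0 a_in b_in; unfold weighted_mean.
  assert (mean_scaled : (b / (w + 1) + w * a / (w + 1)) * (w + 1) = b + w * a)
    by (field; lra).
  split; apply Rmult_le_reg_r with (w + 1); rewrite ?mean_scaled; nra.
Qed.

Lemma weighted_delta_sum_decomp (w xa ya xb yb d x : R) : 0 <= w ->
  w * delta xa ya d x + delta xb yb d x
  = w * delta xa ya d (weighted_mean w xa xb) + delta xb yb d (weighted_mean w xa xb)
    + (w + 1) * (x - weighted_mean w xa xb) ^ 2.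
Proof. intros w_ge0; unfold weighted_mean, delta; field; lra. Qed.

Lemma weighted_delta_sum_min (w xa ya xb yb d x : R) : 0 <= w ->
  w * delta xa ya d (weighted_mean w xa xb) + delta xb yb d (weighted_mean w xa xb)
  <= w * delta xa ya d x + delta xb yb d x.
Proof.
  intros w_ge0; rewrite (weighted_delta_sum_decomp w xa ya xb yb d x w_ge0).
  assert (0 <= (w + 1) * (x - weighted_mean w xa xb) ^ 2)
    by (apply Rmult_le_pos; [lra|apply pow2_ge_0]).
  lra.
Qed.

Lemma delta_le_at_weighted_mean (w xa ya xb yb d : R) :
  1 <= w -> ya ^ 2 <= yb ^ 2 ->
  delta xa ya d (weighted_mean w xa xb) <= delta xb yb d (weighted_mean w xa xb).
Proof.
  intros w_ge1 y_le; unfold delta, weighted_mean.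
  set (u := (xb - xa) / (w + 1)).
  replace (xb / (w + 1) + w * xa / (w + 1) - xa) with u by (unfold u; field; lra).
  replace (xb / (w + 1) + w * xa / (w + 1) - xb) with (- w * u) by (unfold u; field; lra).
  replace ((- w * u) ^ 2) with (u ^ 2 + (w ^ 2 - 1) * u ^ 2) by ring.
  assert (0 <= (w ^ 2 - 1) * u ^ 2) by (apply Rmult_le_pos; [nra|apply pow2_ge_0]).
  lra.
Qed.

Section Power_minimization.

Variables (eta sigma2 d Rt x1 y1 x2 y2 : R).
Hypotheses (eta_pos : 0 < eta) (sigma2_pos : 0 < sigma2) (d_pos : 0 < d)
  (Rt_ge0 : 0 <= Rt).

Definition eps_tilde : R := sigma2 / eta * (exp Rt - 1).

Lemma exp_Rt_ge1 : 1 <= exp Rt.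
Proof. pose proof (exp_ineq1_le Rt); lra. Qed.

Lemma eps_tilde_ge0 : 0 <= eps_tilde.
Proof.
  pose proof exp_Rt_ge1; unfold eps_tilde.
  apply Rmult_le_pos; [apply Rle_mult_inv_pos|]; lra.
Qed.

Lemma R1_NOMA_ge_iff (P1 xm ym x : R) : 0 <= P1 ->
  R1_NOMA eta sigma2 P1 xm ym d x >= Rt <-> P1 >= eps_tilde * delta xm ym d x.
Proof.
  intros P1_ge0; pose proof (delta_pos xm ym d x d_pos).
  unfold R1_NOMA; rewrite ln_1_plus_ratio_ge_iff by nra.
  replace ((exp Rt - 1) * (sigma2 * delta xm ym d x))
    with (eta * (eps_tilde * delta xm ym d x)) by (unfold eps_tilde; field; lra).
  split; intros; nra.
Qed.

Lemma R2_NOMA_ge_iff (P1 P2 xm ym x : R) : 0 <= P1 -> 0 <= P2 ->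
  R2_NOMA eta sigma2 P1 P2 xm ym d x >= Rt
  <-> P2 >= (exp Rt - 1) * P1 + eps_tilde * delta xm ym d x.
Proof.
  intros P1_ge0 P2_ge0; pose proof (delta_pos xm ym d x d_pos).
  unfold R2_NOMA; rewrite ln_1_plus_ratio_ge_iff by nra.
  replace ((exp Rt - 1) * (eta * P1 + sigma2 * delta xm ym d x))
    with (eta * ((exp Rt - 1) * P1 + eps_tilde * delta xm ym d x))
    by (unfold eps_tilde; field; lra).
  split; intros; nra.
Qed.

Definition P1_min (x : R) : R := eps_tilde * delta x1 y1 d x.
Definition P2_min (x : R) : R := (exp Rt - 1) * P1_min x + eps_tilde * delta x2 y2 d x.

Lemma P_min_sum (x : R) :
  P1_min x + P2_min x = eps_tilde * (exp Rt * delta x1 y1 d x + delta x2 y2 d x).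
Proof. unfold P2_min, P1_min; ring. Qed.

Lemma feasible_power_sum_ge (DL P1 P2 x : R) :
  feasible DL eta sigma2 d Rt x1 y1 x2 y2 P1 P2 x ->
  P1_min x + P2_min x <= P1 + P2.
Proof.
  intros (P1_ge0 & P2_ge0 & _ & rate1 & rate2 & _).
  apply R1_NOMA_ge_iff in rate1; [|exact P1_ge0].
  apply R2_NOMA_ge_iff in rate2; [|exact P1_ge0|exact P2_ge0].
  pose proof exp_Rt_ge1.
  assert (0 <= exp Rt * (P1 - P1_min x)) by (apply Rmult_le_pos; unfold P1_min; lra).
  unfold P2_min; lra.
Qed.

Lemma feasible_P_min (DL x : R) :
  - DL / 2 <= x <= DL / 2 -> delta x1 y1 d x <= delta x2 y2 d x ->
  feasible DL eta sigma2 d Rt x1 y1 x2 y2 (P1_min x) (P2_min x) x.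
Proof.
  intros x_in delta_le.
  pose proof exp_Rt_ge1 as exp_ge1; pose proof eps_tilde_ge0 as eps_ge0.
  pose proof (delta_pos x1 y1 d x d_pos) as delta1_pos.
  pose proof (delta_pos x2 y2 d x d_pos) as delta2_pos.
  assert (P1_ge0 : 0 <= P1_min x) by (apply Rmult_le_pos; lra).
  assert (P2_ge0 : 0 <= P2_min x)
    by (apply Rplus_le_le_0_compat; apply Rmult_le_pos; lra).
  refine (conj P1_ge0 (conj P2_ge0 (conj _ (conj _ (conj _ x_in))))).
  (* [R0_NOMA] is [R2_NOMA] evaluated at user 1's position. *)
  - apply R2_NOMA_ge_iff; [exact P1_ge0|exact P2_ge0|].
    unfold P2_min; apply Rle_ge, Rplus_le_compat_l, Rmult_le_compat_l; assumption.
  - apply R1_NOMA_ge_iff; [exact P1_ge0|]; unfold P1_min; lra.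
  - apply R2_NOMA_ge_iff; [exact P1_ge0|exact P2_ge0|]; unfold P2_min; lra.
Qed.

Lemma optimal_at_weighted_mean (DL : R) :
  - DL / 2 <= x1 <= DL / 2 -> - DL / 2 <= x2 <= DL / 2 -> y1 ^ 2 <= y2 ^ 2 ->
  let xs := weighted_mean (exp Rt) x1 x2 in
  optimal DL eta sigma2 d Rt x1 y1 x2 y2 (P1_min xs) (P2_min xs) xs.
Proof.
  intros x1_in x2_in y_le xs; pose proof exp_Rt_ge1; split.
  - apply feasible_P_min.
    + apply weighted_mean_between; lra.
    + apply delta_le_at_weighted_mean; assumption.
  - intros P1 P2 x feas.
    apply Rle_trans with (P1_min x + P2_min x);
      [|exact (feasible_power_sum_ge DL P1 P2 x feas)].
    rewrite !P_min_sum; apply Rmult_le_compat_l; [exact eps_tilde_ge0|].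
    apply weighted_delta_sum_min; lra.
Qed.

End Power_minimization.

Theorem lemma6 (DL d eta sigma2 Rt x1 y1 x2 y2 : R) :
  - DL / 2 <= x1 <= DL / 2 ->
  - DL / 2 <= x2 <= DL / 2 ->
  y1 ^ 2 <= y2 ^ 2 ->
  0 < d -> 0 < eta -> 0 < sigma2 ->
  Rt >= 1 / 2 ->
  let eps := sigma2 / eta * (exp Rt - 1) in
  let tau1 := eps * (y1 ^ 2 + d ^ 2) in
  let tau2 := eps * (y2 ^ 2 + d ^ 2) in
  let xs := x2 / (exp Rt + 1) + exp Rt * x1 / (exp Rt + 1) in
  let P1s := eps * (xs - x1) ^ 2 + tau1 in
  let P2s := eps * eta / sigma2 * P1s + eps * (xs - x2) ^ 2 + tau2 in
  optimal DL eta sigma2 d Rt x1 y1 x2 y2 P1s P2s xs.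
Proof.
  intros x1_in x2_in y_le d_pos eta_pos sigma2_pos Rt_ge_half eps tau1 tau2 xs P1s P2s.
  assert (P1s_eq : P1s = P1_min eta sigma2 d Rt x1 y1 xs)
    by (unfold P1s, P1_min, tau1, eps, eps_tilde, delta; ring).
  assert (P2s_eq : P2s = P2_min eta sigma2 d Rt x1 y1 x2 y2 xs).
  { unfold P2s, P2_min; rewrite <- P1s_eq; unfold tau2, eps, eps_tilde, delta; field; lra. }
  rewrite P1s_eq, P2s_eq.
  apply optimal_at_weighted_mean; lra.
Qed.
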